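(* Let $T$ be a quaternion tensor of size $2\times2\times3$ (two frontal slices, each a $2\times3$ quaternion matrix) or of size $3\times2\times2$ (two frontal slices, each a $3\times2$ quaternion matrix). Then $\mathrm{rank}(T)\le3$.
   Context: $\mathbb{H}$ denotes the real quaternions. An $n_1\times n_2\times n_3$ quaternion tensor is an array $T=(T_{ijk})$ with entries in $\mathbb{H}$, $1\le i\le n_1$, $1\le j\le n_2$, $1\le k\le n_3$; it is written $T=(A_1;\dots;A_{n_2})$ where the frontal slice $A_j$ is the $n_1\times n_3$ matrix $(T_{ijk})_{i,k}$. A nonzero tensor is simple if $T_{ijk}=a_ib_jc_k$ (quaternion product in this order) for some $\vec a\in\mathbb{H}^{n_1},\vec b\in\mathbb{H}^{n_2},\vec c\in\mathbb{H}^{n_3}$. The rank of $T$ is the least number of simple tensors summing to $T$ (the zero tensor has rank $0$). *)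

From mathcomp Require Import all_boot all_order all_algebra.
From mathcomp Require Import reals.
Set Implicit Arguments. Unset Strict Implicit. Unset Printing Implicit Defensive.
Import Order.TTheory GRing.Theory Num.Theory.
Local Open Scope ring_scope.

(* Real quaternion q0 + q1 i + q2 j + q3 k *)
Record quat (R : realType) := Quat { q0 : R; q1 : R; q2 : R; q3 : R }.

Definition qzero (R : realType) : quat R := Quat 0 0 0 0.

Definition qadd (R : realType) (p q : quat R) : quat R :=
  Quat (q0 p + q0 q) (q1 p + q1 q) (q2 p + q2 q) (q3 p + q3 q).

Definition qmul (R : realType) (p q : quat R) : quat R :=
  Quat (q0 p * q0 q - q1 p * q1 q - q2 p * q2 q - q3 p * q3 q)
       (q0 p * q1 q + q1 p * q0 q + q2 p * q3 q - q3 p * q2 q)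
       (q0 p * q2 q - q1 p * q3 q + q2 p * q0 q + q3 p * q1 q)
       (q0 p * q3 q + q1 p * q2 q - q2 p * q1 q + q3 p * q0 q).

Definition qtensor (R : realType) (n1 n2 n3 : nat) :=
  'I_n1 -> 'I_n2 -> 'I_n3 -> quat R.

Definition qtensor_zero (R : realType) n1 n2 n3 : qtensor R n1 n2 n3 :=
  fun _ _ _ => qzero R.

Definition simple_qtensor (R : realType) n1 n2 n3 (T : qtensor R n1 n2 n3) : Prop :=
  T <> @qtensor_zero R n1 n2 n3 /\
  exists (a : 'I_n1 -> quat R) (b : 'I_n2 -> quat R) (c : 'I_n3 -> quat R),
    forall i j k, T i j k = qmul (qmul (a i) (b j)) (c k).

Definition sum_of_simple (R : realType) n1 n2 n3 (T : qtensor R n1 n2 n3) (r : nat) : Prop :=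
  exists S : 'I_r -> qtensor R n1 n2 n3,
    (forall l, simple_qtensor (S l)) /\
    forall i j k, T i j k = \big[@qadd R/qzero R]_(l < r) S l i j k.

Definition qrank_le (R : realType) n1 n2 n3 (T : qtensor R n1 n2 n3) (m : nat) : Prop :=
  exists r, (r <= m)%N /\ sum_of_simple T r.

From HB Require Import structures.
From mathcomp Require Import all_boot all_order all_algebra.
From mathcomp Require Import reals ring lra.
Set Implicit Arguments. Unset Strict Implicit. Unset Printing Implicit Defensive.
Import Order.TTheory GRing.Theory Num.Theory.
Local Open Scope ring_scope.

(* A 2 x 2 x 3 tensor T has four tubes (T_ij.) in H^3.  Since H is a
   division ring, four vectors of H^3 satisfy a nontrivial left relation
   sum_ij lam_ij T_ij. = 0.  Relabeling the two first indices we may assume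
   lam_11 <> 0, so T_11. = p T_00. + q T_01. + s T_10., and for such a
   tensor an explicit sum of three products a_i b_j c_k is written down.
   A 3 x 2 x 2 tensor is reduced to this case by conjugating its entries and
   exchanging the first and third indices, which reverses products.  Finally
   a sum of r products has rank at most r, the vanishing terms being dropped. *)

Section LeftDependence.
Variable D : unitRingType.
Hypothesis unit_of_nz : forall x : D, x != 0 -> x \is a GRing.unit.

(* More than n vectors of D^n admit a nontrivial left linear relation: the
   usual Gaussian elimination argument, which only needs D to be a division
   ring (scalars act on the left). *)
Lemma left_dependent_ord n m (v : 'I_m -> 'I_n -> D) : (n < m)%N ->
  exists lam : 'I_m -> D, (exists i, lam i != 0) /\ forall k, \sum_i lam i * v i k = 0.
Proof.
elim: n m v => [|n IH] [|m] v // ltnm.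
  by exists (fun _ => 1); split; [exists ord0; rewrite oner_neq0 | case].
have [last_col0|] := boolP [forall i, v i ord_max == 0].
  have [lam [nz_lam rel]] := IH _ (fun i k => v i (lift ord_max k)) (ltnW ltnm).
  exists lam; split=> // k; case: (unliftP ord_max k) => [k' ->|->]; first exact: rel.
  by rewrite big1 // => i _; rewrite (eqP (forallP last_col0 i)) mulr0.
move/forallPn => [i0 nz_piv]; set piv := v i0 ord_max in nz_piv.
have piv_unit : piv \is a GRing.unit by apply: unit_of_nz.
(* eliminate the last coordinate using the pivot row i0 *)
pose w (i : 'I_m) (k : 'I_n) := v (lift i0 i) (lift ord_max k) -
   v (lift i0 i) ord_max * piv^-1 * v i0 (lift ord_max k).
have [lam' [[i1 nz_lam'] rel']] := IH m w ltnm.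
pose lam j := if unlift i0 j is Some i then lam' i
              else - \sum_i lam' i * v (lift i0 i) ord_max * piv^-1.
exists lam; split; first by exists (lift i0 i1); rewrite /lam liftK.
move=> k; rewrite (bigD1_ord i0) //= /lam unlift_none.
under eq_bigr do rewrite liftK.
rewrite mulNr mulr_suml addrC; apply/eqP; rewrite subr_eq0; apply/eqP.
case: (unliftP ord_max k) => [k' ->|->].
  move: (rel' k'); rewrite /w /=; under eq_bigr do rewrite mulrBr.
  by move/eqP; rewrite sumrB subr_eq0 => /eqP ->; apply: eq_bigr => i _; rewrite !mulrA.
by apply: eq_bigr => i _; rewrite -!mulrA mulVr // mulr1.
Qed.

Lemma left_dependent (I : finType) n (v : I -> 'I_n -> D) : (n < #|I|)%N ->
  exists lam : I -> D, (exists x, lam x != 0) /\ forall k, \sum_x lam x * v x k = 0.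
Proof.
move=> ltnI; have [lam [[i nz_lam] rel]] := left_dependent_ord (fun i => v (enum_val i)) ltnI.
exists (fun x => lam (enum_rank x)); split; first by exists (enum_val i); rewrite enum_valK.
move=> k; rewrite (reindex _ (onW_bij _ (enum_val_bij I))).
by under eq_bigr do rewrite enum_valK; exact: rel.
Qed.

End LeftDependence.

Lemma big_ord2 (V : nmodType) (F : 'I_2 -> V) : \sum_(i < 2) F i = F ord0 + F ord_max.
Proof. by rewrite big_ord_recr big_ord1; congr (F _ + _); apply: val_inj. Qed.

Lemma ord2P (i : 'I_2) : i = ord0 \/ i = ord_max.
Proof. by case: i => -[|[|?]] // ?; [left|right]; apply: val_inj. Qed.

Definition swap_to (a x : 'I_2) : 'I_2 := if a == ord_max then x else rev_ord x.

Lemma swap_toK (a : 'I_2) : involutive (swap_to a).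
Proof. by move=> x; rewrite /swap_to; case: eqP => // _; rewrite rev_ordK. Qed.

Lemma swap_to_max (a : 'I_2) : swap_to a ord_max = a.
Proof. by rewrite /swap_to; case: (ord2P a) => -> //=; apply: val_inj. Qed.

Section Quaternions.
Variable R : realType.

Definition quat_to_tuple (q : quat R) := (q0 q, q1 q, q2 q, q3 q).
Definition quat_of_tuple (x : R * R * R * R) := let: (a, b, c, d) := x in Quat a b c d.
Lemma quat_to_tupleK : cancel quat_to_tuple quat_of_tuple. Proof. by case. Qed.
HB.instance Definition _ := Equality.copy (quat R) (can_type quat_to_tupleK).
HB.instance Definition _ := Choice.copy (quat R) (can_type quat_to_tupleK).

Lemma quat_ext (p q : quat R) :
  q0 p = q0 q -> q1 p = q1 q -> q2 p = q2 q -> q3 p = q3 q -> p = q.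
Proof. by case: p => ????; case: q => ???? /= -> -> -> ->. Qed.

Ltac quat_ring := repeat match goal with x : quat R |- _ => destruct x end;
  apply: quat_ext => /=; ring.

Definition qopp (p : quat R) := Quat (- q0 p) (- q1 p) (- q2 p) (- q3 p).
Definition qone := Quat (1 : R) 0 0 0.

Lemma qaddA : associative (@qadd R). Proof. by move=> *; quat_ring. Qed.
Lemma qaddC : commutative (@qadd R). Proof. by move=> *; quat_ring. Qed.
Lemma qadd0 : left_id (qzero R) (@qadd R). Proof. by move=> *; quat_ring. Qed.
Lemma qaddN : left_inverse (qzero R) qopp (@qadd R). Proof. by move=> *; quat_ring. Qed.
Lemma qmulA : associative (@qmul R). Proof. by move=> *; quat_ring. Qed.
Lemma qmul1 : left_id qone (@qmul R). Proof. by move=> *; quat_ring. Qed.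
Lemma qmulr1 : right_id qone (@qmul R). Proof. by move=> *; quat_ring. Qed.
Lemma qmulDl : left_distributive (@qmul R) (@qadd R). Proof. by move=> *; quat_ring. Qed.
Lemma qmulDr : right_distributive (@qmul R) (@qadd R). Proof. by move=> *; quat_ring. Qed.
Lemma qone_neq0 : qone != qzero R.
Proof. by apply/eqP => /(congr1 (@q0 R)) /= /eqP; rewrite oner_eq0. Qed.
HB.instance Definition _ := GRing.isNzRing.Build (quat R)
  qaddA qaddC qadd0 qaddN qmulA qmul1 qmulr1 qmulDl qmulDr qone_neq0.

Definition qnorm2 (q : quat R) := q0 q ^+ 2 + q1 q ^+ 2 + q2 q ^+ 2 + q3 q ^+ 2.
Definition qinv (q : quat R) :=
  Quat (q0 q / qnorm2 q) (- q1 q / qnorm2 q) (- q2 q / qnorm2 q) (- q3 q / qnorm2 q).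

Lemma qnorm2_eq0 (q : quat R) : (qnorm2 q == 0) = (q == 0).
Proof.
apply/idP/eqP => [|->]; last by rewrite /qnorm2 /= expr0n !addr0.
case: q => a b c d; rewrite /qnorm2 /= => /eqP n0.
have a2 := sqr_ge0 a; have b2 := sqr_ge0 b; have c2 := sqr_ge0 c; have d2 := sqr_ge0 d.
have sq0 (x : R) : x ^+ 2 = 0 -> x = 0 by move/eqP; rewrite sqrf_eq0 => /eqP.
by apply: quat_ext => /=; apply: sq0; lra.
Qed.

Lemma qmulV : {in [pred q | q != 0], left_inverse 1 qinv *%R}.
Proof.
move=> q; rewrite inE -qnorm2_eq0; case: q => a b c d n0.
by apply: quat_ext; rewrite /= /qnorm2 /=; field; rewrite /qnorm2 in n0.
Qed.

Lemma qmulrV : {in [pred q | q != 0], right_inverse 1 qinv *%R}.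
Proof.
move=> q; rewrite inE -qnorm2_eq0; case: q => a b c d n0.
by apply: quat_ext; rewrite /= /qnorm2 /=; field; rewrite /qnorm2 in n0.
Qed.

Lemma qunitP (x y : quat R) : y * x = 1 /\ x * y = 1 -> x \in [pred q | q != 0].
Proof.
by case=> yx1 _; rewrite inE; apply: contra_eq_neq yx1 => ->; rewrite mulr0 eq_sym oner_neq0.
Qed.

Lemma qinv0 : {in [predC [pred q | q != 0]], qinv =1 id}.
Proof. by move=> x; rewrite !inE negbK => /eqP ->; quat_ring. Qed.

HB.instance Definition _ :=
  GRing.NzRing_hasMulInverse.Build (quat R) qmulV qmulrV qunitP qinv0.

Lemma qunitE (q : quat R) : (q \is a GRing.unit) = (q != 0). Proof. by []. Qed.

(* T is a sum of r terms (a_l i) (b_l j) (c_l k), some of which may vanish;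
   this is the form in which all the decompositions below are produced. *)
Definition decomposable n1 n2 n3 (T : qtensor R n1 n2 n3) (r : nat) : Prop :=
  exists (a : 'I_r -> 'I_n1 -> quat R) (b : 'I_r -> 'I_n2 -> quat R)
         (c : 'I_r -> 'I_n3 -> quat R),
    forall i j k, T i j k = \sum_(l < r) a l i * b l j * c l k.

(* Discarding the vanishing terms shows that a decomposable tensor has rank
   at most r. *)
Lemma decomposable_qrank_le n1 n2 n3 (T : qtensor R n1 n2 n3) r :
  decomposable T r -> qrank_le T r.
Proof.
elim: r T => [|r IH] T [a [b [c decT]]].
  exists 0%N; split=> //; exists (fun _ => @qtensor_zero R n1 n2 n3).
  by split=> [[]|i j k] //; rewrite decT !big_ord0.
pose Z i j k := a ord0 i * b ord0 j * c ord0 k.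
pose T' i j k := \sum_(l < r) a (lift ord0 l) i * b (lift ord0 l) j * c (lift ord0 l) k.
have decZT' i j k : T i j k = Z i j k + T' i j k by rewrite decT big_ord_recl.
have [r' [le_r'r [S [simpleS sumS]]]] : qrank_le (T' : qtensor R n1 n2 n3) r.
  by apply: IH; exists (a \o lift ord0), (b \o lift ord0), (c \o lift ord0).
have [Z0|nzZ] := boolP [forall i, forall j, forall k, Z i j k == 0].
  exists r'; split; first exact: leqW.
  exists S; split=> // i j k.
  by rewrite decZT' (eqP (forallP (forallP (forallP Z0 i) j) k)) add0r sumS.
have simpleZ : simple_qtensor (Z : qtensor R n1 n2 n3).
  split; last by exists (a ord0), (b ord0), (c ord0).
  move=> Z0; case/negP: nzZ; apply/forallP=> i; apply/forallP=> j; apply/forallP=> k.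
  by rewrite Z0.
exists r'.+1; split=> //.
exists (fun l => if unlift ord0 l is Some l' then S l' else Z); split.
  by move=> l; case: (unliftP ord0 l).
move=> i j k; rewrite big_ord_recl unlift_none decZT' sumS.
by congr (_ + _); apply: eq_bigr => l _; rewrite liftK.
Qed.

Lemma decomposable_reindex n1 n2 n3 m1 m2 (f : 'I_n1 -> 'I_m1) (g : 'I_n2 -> 'I_m2)
    (T : qtensor R n1 n2 n3) (T' : qtensor R m1 m2 n3) r :
  (forall i j k, T i j k = T' (f i) (g j) k) -> decomposable T' r -> decomposable T r.
Proof.
move=> eqT [a [b [c decT']]].
by exists (fun l i => a l (f i)), (fun l j => b l (g j)), c => i j k; rewrite eqT decT'.
Qed.

(* The explicit rank-3 decomposition of a 2 x 2 x n tensor one of whose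
   tubes (T_11k)_k is a left combination of the other three: with
   x = p + s + s q and y = q + 1,
     T = (1, y) (1, x) T_00. + (1, q) (0, 1) (T_01. - x T_00.)
       + (0, 1) (1, s) (T_10. - y T_00.). *)
Lemma decomposable_of_combination n (T : qtensor R 2 2 n) (p q s : quat R) :
  (forall k, T ord_max ord_max k =
     p * T ord0 ord0 k + q * T ord0 ord_max k + s * T ord_max ord0 k) ->
  decomposable T 3.
Proof.
move=> combT; pose x := p + s + s * q; pose y := q + 1.
pose pick2 (i : 'I_2) (u v : quat R) := if i == ord0 then u else v.
pose pick3 (l : 'I_3) (u v w : quat R) :=
  match val l with 0 => u | 1 => v | _ => w end.
exists (fun l i => pick3 l (pick2 i 1 y) (pick2 i 1 q) (pick2 i 0 1)).
exists (fun l j => pick3 l (pick2 j 1 x) (pick2 j 0 1) (pick2 j 1 s)).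
exists (fun l k => pick3 l (T ord0 ord0 k) (T ord0 ord_max k - x * T ord0 ord0 k)
                           (T ord_max ord0 k - y * T ord0 ord0 k)).
move=> i j k; rewrite !big_ord_recr big_ord0 /= /pick2.
by case: (ord2P i) => ->; case: (ord2P j) => ->; rewrite /= ?combT /x /y;
  move: (T ord0 ord0 k) (T ord0 ord_max k) (T ord_max ord0 k) => A B C; quat_ring.
Qed.

Lemma decomposable_of_relation n (T : qtensor R 2 2 n) (lam : 'I_2 -> 'I_2 -> quat R) :
  lam ord_max ord_max != 0 -> (forall k, \sum_i \sum_j lam i j * T i j k = 0) ->
  decomposable T 3.
Proof.
move=> nz_lam rel; have lam_unit : lam ord_max ord_max \is a GRing.unit by rewrite qunitE.
pose coef i j := - ((lam ord_max ord_max)^-1 * lam i j).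
apply: (decomposable_of_combination
          (p := coef ord0 ord0) (q := coef ord0 ord_max) (s := coef ord_max ord0)).
move=> k; move/eqP: (rel k); rewrite !big_ord2 addrA addr_eq0 eq_sym eqr_oppLR => /eqP lamT.
rewrite -[T _ _ k](mulKr lam_unit) lamT /coef.
by rewrite !mulrN !mulrDr !opprD !mulNr !mulrA.
Qed.

(* Every 2 x 2 x 3 tensor is decomposable with three terms: its four tubes
   live in H^3, so they satisfy a nontrivial left relation; relabeling the
   indices moves a nonzero coefficient to position (1,1). *)
Lemma decomposable_223 (T : qtensor R 2 2 3) : decomposable T 3.
Proof.
have card4 : (3 < #|{: 'I_2 * 'I_2}|)%N by rewrite card_prod card_ord.
have quat_unit (q : quat R) : q != 0 -> q \is a GRing.unit by rewrite qunitE.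
have [lam [[[a b] nz_lam] rel]] := left_dependent quat_unit (fun x => T x.1 x.2) card4.
pose swap (x : 'I_2 * 'I_2) := (swap_to a x.1, swap_to b x.2).
have swapK : involutive swap by case=> i j; rewrite /swap /= !swap_toK.
apply: (decomposable_reindex (f := swap_to a) (g := swap_to b)
          (T' := fun i j k => T (swap_to a i) (swap_to b j) k)).
  by move=> i j k; rewrite !swap_toK.
apply: (decomposable_of_relation (lam := fun i j => lam (swap (i, j)))).
  by rewrite /swap /= !swap_to_max.
move=> k; rewrite pair_big (reindex_inj (inv_inj swapK)) /=.
apply: etrans (rel k); apply: eq_bigr => -[i j] _.
by rewrite /swap /= !swap_toK.
Qed.

Definition qconj (q : quat R) := Quat (q0 q) (- q1 q) (- q2 q) (- q3 q).
Lemma qconjK : involutive qconj. Proof. by move=> p; quat_ring. Qed.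
Lemma qconjM (p q : quat R) : qconj (p * q) = qconj q * qconj p.
Proof. by quat_ring. Qed.
Lemma qconjD (p q : quat R) : qconj (p + q) = qconj p + qconj q.
Proof. by quat_ring. Qed.
Lemma qconj0 : qconj 0 = 0. Proof. by quat_ring. Qed.

(* Conjugating the entries and exchanging the first and third indices
   reverses every product a_i b_j c_k, hence preserves decomposability. *)
Lemma decomposable_conj_transpose n1 n2 n3 (T : qtensor R n1 n2 n3) r :
  decomposable (fun k j i => qconj (T i j k) : quat R) r -> decomposable T r.
Proof.
move=> [a [b [c decT]]].
exists (fun l i => qconj (c l i)), (fun l j => qconj (b l j)), (fun l k => qconj (a l k)).
move=> i j k; rewrite -[T i j k]qconjK decT (big_morph qconj qconjD qconj0).
by apply: eq_bigr => l _; rewrite !qconjM mulrA.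
Qed.

End Quaternions.

Local Close Scope ring_scope.

Theorem mainTheorem8 (R : realType) :
  (forall T : qtensor R 2 2 3, qrank_le T 3) /\
  (forall T : qtensor R 3 2 2, qrank_le T 3).
Proof.
split=> T; apply: decomposable_qrank_le; first exact: decomposable_223.
apply: decomposable_conj_transpose; exact: decomposable_223.
Qed.
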